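(* Let $r\ge 2$, $d\ge 2$. Let $\Delta\subset\mathbb{R}^d$ be a regular simplex with vertices $v_1,\ldots,v_{d+1}$, and let $B$ be the closed Euclidean unit ball centred at the origin. Then for all sufficiently small $\varepsilon>0$ the following holds. Let $U_1\subset v_1+\varepsilon B$ be a set of $r$ points and, for $h\in\{2,\ldots,d+1\}$, let $U_h\subset v_h+\varepsilon B$ be a set of $r-1$ points, chosen so that the coordinates of the points of $A=\bigcup_{h=1}^{d+1}U_h$ are algebraically independent (so $|A|=(r-1)(d+1)+1$), and let $M=U_1$. Then $\operatorname{conv}M\cap\operatorname{conv}(A\setminus M)=\emptyset$, $|M|=r$, and there is no proper partition $\{A_1,\ldots,A_r\}$ of $A$ for which the solution $(z,\alpha)$ of \[ z=\sum_{x\in A_j}\alpha(x)\,x \quad\text{and}\quad 1=\sum_{x\in A_j}\alpha(x)\qquad\text{for all } j\in[r] \] satisfies $\alpha(x)<0$ for all $x\in M$ and $\alpha(x)>0$ for all $x\in A\setminus M$.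
   Context: A partition $\{A_1,\ldots,A_r\}$ of $A$ into $r$ parts is called proper if $1\le |A_j|\le d+1$ for every $j$. *)

From HB Require Import structures.
From mathcomp Require Import all_boot all_order all_algebra.
Set Implicit Arguments. Unset Strict Implicit. Unset Printing Implicit Defensive.
Import Order.TTheory GRing.Theory Num.Theory.
Local Open Scope ring_scope.

Definition sqnorm (R : numDomainType) (d : nat) (x : 'rV[R]_d) : R :=
  \sum_(k < d) x ord0 k ^+ 2.

Definition regular_simplex (R : numDomainType) (d : nat)
    (v : 'I_d.+1 -> 'rV[R]_d) : Prop :=
  exists s : R, 0 < s /\ forall i j, i != j -> sqnorm (v i - v j) = s.

(* Algebraic independence over Q of a finite family of elements c : J -> R:
   every polynomial with rational coefficients (of degree < D in each
   variable, for arbitrary D) vanishing at c is the zero polynomial. *)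
Definition alg_indep (R : numFieldType) (J : finType) (c : J -> R) : Prop :=
  forall (D : nat) (coef : {ffun J -> 'I_D} -> rat),
    \sum_(e : {ffun J -> 'I_D}) ratr (coef e) * \prod_(j : J) c j ^+ e j = 0 ->
    forall e, coef e = 0.

Definition in_conv (R : numDomainType) (d : nat) (I : finType) (S : {set I})
    (p : I -> 'rV[R]_d) (y : 'rV[R]_d) : Prop :=
  exists lam : I -> R, (forall i, i \in S -> 0 <= lam i) /\
    \sum_(i in S) lam i = 1 /\ y = \sum_(i in S) lam i *: p i.

Definition proper_partition (I : finType) (r d : nat) (P : {set {set I}}) : Prop :=
  partition P [set: I] /\ #|P| = r /\
  forall B, B \in P -> (1 <= #|B| <= d.+1)%N.

(* index type of the points of A: inl i (i < r) are the points of U_1,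
   inr (k, j) (k < d, j < r-1) are the points of U_(k+2). *)
Definition ptidx (r d : nat) : finType := ('I_r + ('I_d * 'I_r.-1))%type.

(* cluster of an index: which vertex (0-based) it is close to *)
Definition cluster (r d : nat) (t : ptidx r d) : 'I_d.+1 :=
  match t with inl _ => ord0 | inr (k, _) => lift ord0 k end.

Definition Midx (r d : nat) : {set ptidx r d} :=
  [set t : ptidx r d | if t is inl _ then true else false].

(* With lam k the barycentric coordinate of the simplex attached to the vertex
   v (lift ord0 k) (for a regular simplex its dual basis is explicit) and
   height = \sum_k lam k = 1 - (coordinate of v ord0), the points of M have
   height close to 0 and all other points height close to 1, which separates
   the convex hulls.  For a partition into r blocks, each of the d clusters
   away from v ord0 has only r - 1 points, so some block avoids it; within that
   block lam k z is an affine combination of nearly vanishing values, hence at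
   most eta * \sum |alpha|, and the sign pattern of alpha bounds \sum |alpha|
   by 4 * height z.  Summing over k gives height z <= 4 d eta * height z,
   whereas height z >= 1 - d eta > 0.  Algebraic independence is only needed to
   make the r points of M distinct. *)

From HB Require Import structures.
From mathcomp Require Import all_boot all_order all_algebra.
From mathcomp Require Import ring lra.
Import Order.TTheory GRing.Theory Num.Theory.
Set Implicit Arguments. Unset Strict Implicit. Unset Printing Implicit Defensive.
Local Open Scope ring_scope.

Definition dotv (R : numDomainType) (d : nat) (u w : 'rV[R]_d) : R :=
  \sum_(k < d) u ord0 k * w ord0 k.

Section DotProduct.
Variables (R : numDomainType) (d : nat).
Implicit Types (u w : 'rV[R]_d).

Lemma dotC u w : dotv u w = dotv w u.
Proof. by apply: eq_bigr => k _; rewrite mulrC. Qed.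

Lemma dotZl (a : R) u w : dotv (a *: u) w = a * dotv u w.
Proof. by rewrite /dotv mulr_sumr; apply: eq_bigr => k _; rewrite mxE mulrA. Qed.

Lemma dotBl u u' w : dotv (u - u') w = dotv u w - dotv u' w.
Proof. by rewrite /dotv -sumrB; apply: eq_bigr => k _; rewrite !mxE mulrBl. Qed.

Lemma dot_suml (I : finType) (P : pred I) (f : I -> 'rV[R]_d) w :
  dotv (\sum_(i | P i) f i) w = \sum_(i | P i) dotv (f i) w.
Proof.
rewrite /dotv; under eq_bigr => k _ do rewrite summxE mulr_suml.
exact: exchange_big.
Qed.

Lemma sqnorm_addZ (c : R) u w :
  sqnorm (u + c *: w) = sqnorm u + 2 * c * dotv u w + c ^+ 2 * sqnorm w.
Proof.
rewrite /sqnorm /dotv !mulr_sumr -!big_split /=; apply: eq_bigr => k _.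
by rewrite !mxE; ring.
Qed.

Lemma sqnorm_sub u w : sqnorm (u - w) = sqnorm u - 2 * dotv u w + sqnorm w.
Proof. by rewrite -scaleN1r sqnorm_addZ; ring. Qed.

Lemma dot0l w : dotv 0 w = 0.
Proof. by rewrite /dotv big1 // => k _; rewrite mxE mul0r. Qed.

Lemma dot_self u : dotv u u = sqnorm u.
Proof. by apply: eq_bigr => k _; rewrite expr2. Qed.

Lemma dot_affine_comb (I : finType) (B : {set I}) (a : I -> R) (p : I -> 'rV[R]_d) c w :
  \sum_(t in B) a t = 1 ->
  dotv (\sum_(t in B) a t *: p t - c) w = \sum_(t in B) a t * dotv (p t - c) w.
Proof.
move=> a1; rewrite -[c in LHS]scale1r -a1 scaler_suml -sumrB dot_suml.
by apply: eq_bigr => t _; rewrite -scalerBr dotZl.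
Qed.

End DotProduct.

Lemma sqnorm_ge0 (R : realDomainType) d (u : 'rV[R]_d) : 0 <= sqnorm u.
Proof. by apply: sumr_ge0 => k _; exact: sqr_ge0. Qed.

Lemma normr_dot_le (R : realFieldType) d (e : R) (u w : 'rV[R]_d) :
  0 < e -> sqnorm u <= e ^+ 2 -> `|dotv u w| <= e * (1 + sqnorm w) / 2.
Proof.
move=> e0 hu.
have h1 := sqnorm_ge0 (u + (- e) *: w).
have h2 := sqnorm_ge0 (u + e *: w).
rewrite sqnorm_addZ in h1; rewrite sqnorm_addZ in h2.
have hw := sqnorm_ge0 w.
by rewrite ler_norml; apply/andP; split; rewrite -(ler_pM2l e0); nra.
Qed.

Lemma uniform_dot_bound (R : realFieldType) d n (w : 'I_n -> 'rV[R]_d) :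
  exists K, 0 < K /\ forall k eps u, 0 < eps -> sqnorm u <= eps ^+ 2 ->
    `|dotv u (w k)| <= eps * K.
Proof.
have q_ge0 k : 0 <= (1 + sqnorm (w k)) / 2 by rewrite divr_ge0 ?addr_ge0 ?sqnorm_ge0.
exists (1 + \sum_k (1 + sqnorm (w k)) / 2); split.
  by rewrite ltr_wpDr ?sumr_ge0.
move=> k eps u eps_gt0 u_small; rewrite (le_trans (normr_dot_le _ eps_gt0 u_small)) //.
rewrite -mulrA ler_pM2l // (bigD1 k) //= addrCA lerDl addr_ge0 ?sumr_ge0 //.
Qed.

Lemma regular_simplex_dual_basis (R : numFieldType) d (v : 'I_d.+1 -> 'rV[R]_d) :
  regular_simplex v -> exists w : 'I_d -> 'rV[R]_d,
    forall j k, dotv (v (lift ord0 j) - v ord0) (w k) = (j == k)%:R.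
Proof.
case=> s [s0 hs]; pose e j := v (lift ord0 j) - v ord0.
have gram j k : dotv (e j) (e k) = if j == k then s else s / 2.
  have ejk : e j - e k = v (lift ord0 j) - v (lift ord0 k).
    by rewrite /e opprB addrA subrK.
  case: eqVneq => [->|njk]; first by rewrite dot_self /e hs ?neq_lift.
  have := sqnorm_sub (e j) (e k).
  rewrite {1}ejk /e !hs ?neq_lift ?(inj_eq lift_inj) // => hsub.
  rewrite [LHS](_ : _ = (s + s - (s - 2 * dotv (e j) (e k) + s)) / 2); last by field.
  by rewrite -hsub; field.
have dn0 : d%:R + 1 != 0 :> R by rewrite -[1]/(1%:R) -natrD pnatr_eq0 addn1.
exists (fun k => (2 / s) *: e k - (2 / (s * (d%:R + 1))) *: \sum_i e i) => j k.
rewrite -/(e j) dotC dotBl !dotZl dot_suml gram.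
rewrite (eq_bigr (fun i => s / 2 + (if i == j then s / 2 else 0))); last first.
  by move=> i _; rewrite gram; case: eqP => _; [field | rewrite addr0].
rewrite big_split /= sumr_const card_ord -big_mkcond big_pred1_eq eq_sym.
by case: eqP => _ /=; rewrite -[_ *+ d]mulr_natl; field; rewrite dn0 gt_eqF.
Qed.

Lemma signed_affine_comb_bounds (R : realFieldType) (I : finType) (B M : {set I})
    (a f : I -> R) (eta : R) :
  0 <= eta -> 4 * eta <= 1 -> \sum_(t in B) a t = 1 ->
  (forall t, t \in B -> if t \in M then a t < 0 else 0 < a t) ->
  (forall t, t \in M -> f t <= eta) -> (forall t, t \notin M -> 1 - eta <= f t) ->
  1 - eta <= \sum_(t in B) a t * f t /\
  \sum_(t in B) `|a t| <= 4 * \sum_(t in B) a t * f t.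
Proof.
move=> eta0 eta4 a1 sgn fM fN.
pose A := \sum_(t in B) (if t \in M then 0 else a t).
have A1 : 1 <= A.
  rewrite -a1; apply: ler_sum => t /sgn; case: (t \in M) => h; lra.
have normA : \sum_(t in B) `|a t| = 2 * A - 1.
  rewrite -[X in _ = _ - X]a1 mulr_sumr -sumrB; apply: eq_bigr => t /sgn.
  by case: (t \in M) => h; [rewrite ltr0_norm // | rewrite gtr0_norm //]; ring.
have lowS : A - eta * (2 * A - 1) <= \sum_(t in B) a t * f t.
  rewrite -normA mulr_sumr /A -sumrB; apply: ler_sum => t tB.
  have := sgn t tB; case: ifPn => tM at0.
    by have := fM t tM; rewrite ltr0_norm //; nra.
  by have := fN t tM; rewrite gtr0_norm //; nra.
rewrite normA; split; nra.
Qed.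

Section ConvexCombinationBounds.
Variables (R : realDomainType) (I : finType) (S : {set I}) (l f : I -> R) (c : R).
Hypotheses (l_ge0 : forall i, i \in S -> 0 <= l i) (l_sum1 : \sum_(i in S) l i = 1).

Lemma convex_comb_le : (forall i, i \in S -> f i <= c) -> \sum_(i in S) l i * f i <= c.
Proof.
move=> fc; rewrite -[c]mul1r -[X in X * c]l_sum1 mulr_suml.
by apply: ler_sum => i iS; rewrite ler_wpM2l ?l_ge0 ?fc.
Qed.

Lemma convex_comb_ge : (forall i, i \in S -> c <= f i) -> c <= \sum_(i in S) l i * f i.
Proof.
move=> fc; rewrite -[c]mul1r -[X in X * c]l_sum1 mulr_suml.
by apply: ler_sum => i iS; rewrite ler_wpM2l ?l_ge0 ?fc.
Qed.

End ConvexCombinationBounds.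

Lemma partition_disjoint_block (I : finType) (P : {set {set I}}) (A : {set I}) :
  partition P [set: I] -> (#|A| < #|P|)%N -> exists2 B, B \in P & [disjoint B & A].
Proof.
case/and3P=> _ trivP _ ltAP.
have /subsetPn[B BP BnA] : ~~ (P \subset pblock P @: A).
  by apply: contraTN ltAP => /subset_leq_card/leq_trans/(_ (leq_imset_card _ _)); rewrite leqNgt.
exists B => //; apply/pred0P => t /=; apply/negbTE/negP => /andP[tB tA].
by move: BnA; rewrite -(def_pblock trivP BP tB) imset_f.
Qed.

Lemma alg_indep_inj (R : numFieldType) (J : finType) (c : J -> R) :
  alg_indep c -> injective c.
Proof.
move=> indep a b cab; apply/eqP/negPn/negP => nab.
pose mono (x : J) : {ffun J -> 'I_2} := [ffun y => if y == x then ord_max else ord0].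
have monoE x : \prod_y c y ^+ mono x y = c x.
  rewrite (bigD1 x) //= ffunE eqxx expr1 big1 ?mulr1 // => y yx.
  by rewrite ffunE (negbTE yx) expr0.
have mono_neq : mono a != mono b.
  apply: contra nab => /eqP/ffunP/(_ a); rewrite !ffunE eqxx.
  by case: eqP => // _ /(congr1 val).
pose coef e : rat := if e == mono a then 1 else if e == mono b then -1 else 0.
suff : coef (mono a) = 0 by rewrite /coef eqxx => /eqP; rewrite oner_eq0.
apply: (indep 2).
rewrite (bigD1 (mono a)) //= (bigD1 (mono b)) 1?eq_sym //= [X in _ + (_ + X)]big1; last first.
  by move=> e /andP[ea eb]; rewrite /coef (negbTE ea) (negbTE eb) rmorph0 mul0r.
by rewrite /coef eqxx eq_sym (negbTE mono_neq) eqxx rmorph1 rmorphN1 !monoE cab; ring.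
Qed.

Section SimplexCoordinates.
Variables (R : realFieldType) (d : nat) (I : finType).
Variables (v : 'I_d.+1 -> 'rV[R]_d) (w : 'I_d -> 'rV[R]_d).
Hypothesis dual : forall j k, dotv (v (lift ord0 j) - v ord0) (w k) = (j == k)%:R.
Variables (cluster : I -> 'I_d.+1) (p : I -> 'rV[R]_d) (eta : R).

Let lam k x := dotv (x - v ord0) (w k).
Let height x := \sum_k lam k x.
Let M := [set t | cluster t == ord0].

Hypothesis eta_ge0 : 0 <= eta.
Hypothesis eta_small : 4 * d%:R * eta < 1.
Hypothesis near : forall k t, `|lam k (p t) - lam k (v (cluster t))| <= eta.

Lemma lam_vertex k c : lam k (v c) = (c == lift ord0 k)%:R.
Proof.
case: (unliftP ord0 c) => [j ->|->]; first by rewrite /lam dual (inj_eq lift_inj).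
by rewrite /lam subrr dot0l (negbTE (neq_lift _ _)).
Qed.

Lemma height_vertex c : height (v c) = (c != ord0)%:R.
Proof.
case: (unliftP ord0 c) => [j ->|->]; last first.
  by rewrite eqxx /height big1 // => k _; rewrite lam_vertex (negbTE (neq_lift _ _)).
rewrite /height (eq_bigr (fun k => if k == j then 1 else 0)) => [|k _]; last first.
  by rewrite lam_vertex (inj_eq lift_inj) eq_sym; case: eqP.
by rewrite -big_mkcond big_pred1_eq eq_sym neq_lift.
Qed.

Lemma lam_affine_comb k (B : {set I}) (a : I -> R) :
  \sum_(t in B) a t = 1 -> lam k (\sum_(t in B) a t *: p t) = \sum_(t in B) a t * lam k (p t).
Proof. exact: dot_affine_comb. Qed.

Lemma height_affine_comb (B : {set I}) (a : I -> R) :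
  \sum_(t in B) a t = 1 -> height (\sum_(t in B) a t *: p t) = \sum_(t in B) a t * height (p t).
Proof.
move=> a1; rewrite /height; under eq_bigr => k _ do rewrite lam_affine_comb //.
by rewrite exchange_big; apply: eq_bigr => t _; rewrite mulr_sumr.
Qed.

Lemma height_pt_bounds t :
  (t \in M -> height (p t) <= d%:R * eta) /\
  (t \notin M -> 1 - d%:R * eta <= height (p t)).
Proof.
have : `|height (p t) - height (v (cluster t))| <= d%:R * eta.
  rewrite /height -sumrB (le_trans (ler_norm_sum _ _ _)) //.
  by rewrite [d%:R * _]mulr_natl -[X in _ *+ X]card_ord -sumr_const; apply: ler_sum.
rewrite height_vertex !inE ler_norml => /andP[lo hi].
split=> [/eqP ct | /negbTE ct]; move: lo hi; rewrite ct ?eqxx /= ?subr0 => lo hi; lra.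
Qed.

Lemma conv_hulls_disjoint : ~ exists y, in_conv M p y /\ in_conv (~: M) p y.
Proof.
case=> y [[l1 [l1_ge0 [l1_sum ->]]] [l2 [l2_ge0 [l2_sum y_eq]]]].
have up : height (\sum_(t in M) l1 t *: p t) <= d%:R * eta.
  rewrite height_affine_comb //; apply: convex_comb_le => // t tM.
  exact: (proj1 (height_pt_bounds t)).
have low : 1 - d%:R * eta <= height (\sum_(t in M) l1 t *: p t).
  rewrite y_eq height_affine_comb //; apply: convex_comb_ge => // t.
  by rewrite inE => /(proj2 (height_pt_bounds t)).
have : 0 <= d%:R * eta by rewrite mulr_ge0.
have := eta_small; lra.
Qed.

Lemma no_signed_affine_partition (P : {set {set I}}) :
  (0 < d)%N -> partition P [set: I] ->
  (forall k, #|[set t | cluster t == lift ord0 k]| < #|P|)%N ->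
  ~ exists (z : 'rV[R]_d) (a : I -> R),
    (forall B, B \in P -> z = \sum_(t in B) a t *: p t /\ \sum_(t in B) a t = 1) /\
    (forall t, if t \in M then a t < 0 else 0 < a t).
Proof.
move=> d_gt0 partP fewP [z [a [combP sgn]]].
have deta_ge0 : 0 <= d%:R * eta by rewrite mulr_ge0.
have deta_small : 4 * (d%:R * eta) < 1 by rewrite mulrA.
have block B : B \in P ->
    1 - d%:R * eta <= height z /\ \sum_(t in B) `|a t| <= 4 * height z.
  move=> BP; have [-> a1] := combP B BP.
  rewrite height_affine_comb //.
  apply: signed_affine_comb_bounds => // [|t|t].
  - lra.
  - exact: (proj1 (height_pt_bounds t)).
  - exact: (proj2 (height_pt_bounds t)).
have lam_z k : lam k z <= eta * (4 * height z).
  have [B BP disjB] := partition_disjoint_block partP (fewP k).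
  have [_ normB] := block B BP; have [zB a1] := combP B BP.
  apply: le_trans (ler_wpM2l eta_ge0 normB).
  rewrite zB lam_affine_comb // mulr_sumr; apply: ler_sum => t tB.
  rewrite (le_trans (ler_norm _)) //.
  have : cluster t != lift ord0 k.
    by apply: contraTN disjB => ct; apply/pred0Pn; exists t; rewrite /= tB inE ct.
  move=> /negbTE ct; have := near k t; rewrite lam_vertex ct /= subr0.
  by rewrite normrM mulrC; apply: ler_wpM2r.
have [B BP _] := partition_disjoint_block partP (fewP (Ordinal d_gt0)).
have [z_pos _] := block B BP.
have : height z <= d%:R * (eta * (4 * height z)).
  rewrite {1}/height [d%:R * _]mulr_natl -[X in _ *+ X]card_ord -sumr_const.
  by apply: ler_sum => k _.
have : 0 < height z * (1 - 4 * (d%:R * eta)) by apply: mulr_gt0; lra.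
lra.
Qed.

End SimplexCoordinates.

Lemma Midx_cluster r d : Midx r d = [set t | cluster t == ord0].
Proof. by apply/setP => -[i|[k j]]; rewrite !inE //= eq_sym (negbTE (neq_lift _ _)). Qed.

Lemma card_Midx r d : #|Midx r d| = r.
Proof.
have -> : Midx r d = inl @: [set: 'I_r].
  by apply/setP => -[i|x]; rewrite inE /=; apply/esym; [apply: imset_f | apply/imsetP => -[]].
by rewrite card_imset ?cardsT ?card_ord // => i j [].
Qed.

Lemma card_cluster_lift r d (k : 'I_d) :
  #|[set t : ptidx r d | cluster t == lift ord0 k]| = r.-1.
Proof.
have -> : [set t : ptidx r d | cluster t == lift ord0 k] = [set inr (k, j) | j : 'I_r.-1].
  apply/setP => -[i|[k' j]]; rewrite !inE /=.
    by rewrite (negbTE (neq_lift _ _)); apply/esym/imsetP => -[].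
  rewrite (inj_eq lift_inj); apply/eqP/imsetP => [-> | [j' _ [-> _]] //].
  by exists j.
by rewrite card_imset ?card_ord // => j j' [].
Qed.

Lemma row_inj_of_coord_inj (R : numDomainType) (I : finType) d (p : I -> 'rV[R]_d) :
  (0 < d)%N -> injective (fun ik : I * 'I_d => p ik.1 ord0 ik.2) -> injective p.
Proof.
move=> d_gt0 coord_inj i j pij.
pose k := Ordinal d_gt0.
by case: (coord_inj (i, k) (j, k) (congr1 (fun x : 'rV[R]_d => x ord0 k) pij)).
Qed.

Theorem mainTheorem8 (R : archiRealFieldType) (r d : nat) (hr : (2 <= r)%N) (hd : (2 <= d)%N)
  (v : 'I_d.+1 -> 'rV[R]_d) (hv : regular_simplex v) :
  exists eps0 : R, 0 < eps0 /\
  forall eps : R, 0 < eps -> eps < eps0 ->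
  forall pt : ptidx r d -> 'rV[R]_d,
    (forall t, sqnorm (pt t - v (cluster t)) <= eps ^+ 2) ->
    alg_indep (fun tk : ptidx r d * 'I_d => pt tk.1 ord0 tk.2) ->
    [/\ ~ (exists y, in_conv (Midx r d) pt y /\ in_conv (~: Midx r d) pt y),
        size (undup [seq pt t | t <- enum (Midx r d)]) = r &
        ~ (exists (P : {set {set ptidx r d}}) (z : 'rV[R]_d) (alpha : ptidx r d -> R),
             [/\ proper_partition r d P,
                 (forall B, B \in P ->
                    z = \sum_(t in B) alpha t *: pt t /\ \sum_(t in B) alpha t = 1) &
                 (forall t, if t \in Midx r d then alpha t < 0 else 0 < alpha t)])].
Proof.
have d_gt0 : (0 < d)%N by apply: leq_trans hd.
have [w dual] := regular_simplex_dual_basis hv.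
have [K [K_gt0 wK]] := uniform_dot_bound w.
have dK_gt0 : 0 < 4 * d%:R * K by rewrite !mulr_gt0 // ltr0n.
exists (1 / (4 * d%:R * K)); split => [|eps eps_gt0 eps_lt pt pt_near indep].
  by rewrite divr_gt0.
have near k t : `|dotv (pt t - v ord0) (w k) - dotv (v (cluster t) - v ord0) (w k)| <= eps * K.
  by rewrite -dotBl opprB addrA subrK wK.
have eta_small : 4 * d%:R * (eps * K) < 1 by rewrite mulrCA -ltr_pdivlMr.
have eta_ge0 : 0 <= eps * K by rewrite mulr_ge0 ?ltW.
split.
- by rewrite Midx_cluster; apply: (conv_hulls_disjoint dual eta_ge0 eta_small near).
- rewrite undup_id ?size_map -?cardE ?card_Midx // map_inj_uniq ?enum_uniq //.
  exact: row_inj_of_coord_inj d_gt0 (alg_indep_inj indep).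
- case=> P [z [alpha [[partP [cardP _]] combP sgn]]].
  rewrite Midx_cluster in sgn.
  apply: (no_signed_affine_partition dual eta_ge0 eta_small near d_gt0 partP).
  + by move=> k; rewrite card_cluster_lift cardP prednK ?ltnSn // (leq_trans _ hr).
  + by exists z, alpha.
Qed.
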